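(* Fix a basis $\{b_1,\ldots,b_d\}$ of $\mathbb{R}^d$. For each $I\subseteq [d]=\{1,\dots,d\}$, let $p_I:\mathbb{R}^d\to \mathbb{R}^I$ be the projection onto the span of $\{b_i\}_{i\in I}$ along the given basis (i.e. $p_I(\sum_i x_ib_i)=\sum_{i\in I}x_ib_i$). Then, for any non-empty finite subsets $A,B$ of $\mathbb{R}^d$, $$|A+B|\geq \left(|A|^{1/d}+|B|^{1/d}\right)^d-\sum_{I\subsetneq [d]}|p_I(A+B)|.$$ *)

From HB Require Import structures.
From mathcomp Require Import all_boot all_order all_algebra finmap.
From mathcomp Require Import all_classical all_reals all_analysis.
Set Implicit Arguments. Unset Strict Implicit. Unset Printing Implicit Defensive.
Import Order.TTheory GRing.Theory Num.Theory.
Local Open Scope ring_scope.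

(* The basis {b_1..b_d} is given by the rows of an invertible matrix b.
   Coordinates of x in that basis: the row vector c with x = c *m b,
   i.e. c = x *m invmx b. *)
Definition coords {R : realType} {d : nat} (b : 'M[R]_d) (x : 'rV[R]_d)
  : 'rV[R]_d := x *m invmx b.

Definition projI {R : realType} {d : nat} (b : 'M[R]_d) (I : {set 'I_d})
  (x : 'rV[R]_d) : 'rV[R]_d :=
  (\row_i (if i \in I then coords b x 0 i else 0)) *m b.

Definition sumset {R : realType} {d : nat} (A B : {fset 'rV[R]_d})
  : {fset 'rV[R]_d} := [fset (a + b')%R | a in A, b' in B]%fset.

From HB Require Import structures.
From mathcomp Require Import all_boot all_order all_algebra finmap.
From mathcomp Require Import all_classical all_reals all_analysis.
From mathcomp Require Import ring lra.
Set Implicit Arguments. Unset Strict Implicit. Unset Printing Implicit Defensive.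
Import Order.TTheory GRing.Theory Num.Theory.
Local Open Scope ring_scope.

(* Induction on the number of coordinates.  Write [F_D(S)] for the sum of
   [|p_I S|] over [I ⊆ D].  Slicing along a coordinate [k ∈ D] gives
   [F_D(S) = F_(D∖k)(S) + Σ_z F_(D∖k)(S_z)], where [S_z] is the slice of [S]
   at height [z], and the slice of [A + B] at [a + b] contains [A_a + B_b].
   By induction [F_(D∖k)(A_a + B_b)] is at least [min(w_a, w'_b)] for weights
   proportional to the sizes of the slices, so a weighted form of the
   one-dimensional inequality [|X + Y| >= |X| + |Y| - 1] bounds the sum over
   the slices of [A + B]; Hölder's inequality then turns that bound into
   [(|p_D A|^(1/n) + |p_D B|^(1/n))^n].  Coordinates in the basis [b] reduce
   the theorem to the standard basis. *)

Section Holder.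
Variable R : realFieldType.

Lemma exprn_convex (l a c : R) n : 0 <= l <= 1 -> 0 <= a -> 0 <= c ->
  (l * a + (1 - l) * c) ^+ n <= l * a ^+ n + (1 - l) * c ^+ n.
Proof.
move=> /andP[l0 l1] a0 c0; elim: n => [|n IHn]; first by rewrite !expr0; lra.
have m0 : 0 <= l * a + (1 - l) * c by rewrite addr_ge0 ?mulr_ge0 //; lra.
have cheb : 0 <= (a - c) * (a ^+ n - c ^+ n).
  have [ac|ca] := lerP a c.
    by apply: mulr_le0; rewrite subr_le0 // lerXn2r // nnegrE.
  by apply: mulr_ge0; rewrite subr_ge0 ?lerXn2r ?nnegrE // ltW.
have l1l : 0 <= l * (1 - l) by rewrite mulr_ge0 //; lra.
rewrite exprS; apply: le_trans (ler_wpM2l m0 IHn) _; rewrite -subr_ge0 !exprS.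
apply: le_trans (mulr_ge0 l1l cheb) _; rewrite le_eqVlt; apply/orP; left; apply/eqP.
by ring.
Qed.

(* Convexity of [x ^+ n.+1] at [s / P] and [t / Q], with weights proportional to [P] and [Q]. *)
Lemma holder_exprSn n (x y P Q s t : R) : 0 <= s -> 0 <= t -> 0 < P -> 0 < Q ->
  s ^+ n.+1 <= x * P ^+ n -> t ^+ n.+1 <= y * Q ^+ n ->
  (s + t) ^+ n.+1 <= (x + y) * (P + Q) ^+ n.
Proof.
move=> s0 t0 P0 Q0 hs ht.
have PQ0 : 0 < P + Q by lra.
pose l := P / (P + Q).
have l01 : 0 <= l <= 1.
  by rewrite /l divr_ge0 ?(ltW P0) ?(ltW PQ0) //= ler_pdivrMr // mul1r; lra.
have := exprn_convex n.+1 l01 (divr_ge0 s0 (ltW P0)) (divr_ge0 t0 (ltW Q0)).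
have -> : l * (s / P) + (1 - l) * (t / Q) = (s + t) / (P + Q).
  by rewrite /l; field; rewrite !gt_eqF.
rewrite !expr_div_n ler_pdivrMr ?exprn_gt0 // => /le_trans; apply.
have -> : (l * (s ^+ n.+1 / P ^+ n.+1) + (1 - l) * (t ^+ n.+1 / Q ^+ n.+1)) * (P + Q) ^+ n.+1
    = (s ^+ n.+1 / P ^+ n + t ^+ n.+1 / Q ^+ n) * (P + Q) ^+ n.
  by rewrite /l !exprS; field; rewrite !gt_eqF ?exprn_gt0.
by rewrite ler_wpM2r ?exprn_ge0 ?(ltW PQ0) // lerD // ler_pdivrMr ?exprn_gt0.
Qed.

End Holder.

Section FsetExtremum.
Variables (K : choiceType) (disp : Order.disp_t) (T : orderType disp) (F : K -> T).

Lemma fset_argmax (X : {fset K}) : X != fset0 ->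
  exists2 a, a \in X & forall x, x \in X -> (F x <= F a)%O.
Proof.
move=> /fset0Pn[x0 x0X].
have [/= a _ /(_ _ isT) ha] := @arg_maxP _ _ _ [` x0X]%fset xpredT (F \o val) isT.
by exists (val a) => [|x xX]; [exact: valP | exact: (ha [` xX]%fset)].
Qed.

Lemma fset_argmin (X : {fset K}) : X != fset0 ->
  exists2 a, a \in X & forall x, x \in X -> (F a <= F x)%O.
Proof.
move=> /fset0Pn[x0 x0X].
have [/= a _ /(_ _ isT) ha] := @arg_minP _ _ _ [` x0X]%fset xpredT (F \o val) isT.
by exists (val a) => [|x xX]; [exact: valP | exact: (ha [` xX]%fset)].
Qed.

End FsetExtremum.

Lemma card_fset_fibers (K T : choiceType) (f : K -> T) (M : {fset K}) :
  #|` M| = (\sum_(z <- (f @` M)%fset) #|` [fset x in M | f x == z]%fset|)%N.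
Proof.
rewrite card_fset_sum1 (partition_big_imfset _ f).
by apply: eq_bigr => z _; rewrite big_fset_condE card_fset_sum1.
Qed.

Section Minkowski.
Variable V : zmodType.
Implicit Types X Y : {fset V}.

Definition minkowski X Y : {fset V} := [fset (x + y)%R | x in X, y in Y]%fset.

Lemma minkowskiP X Y z :
  reflect (exists x y, [/\ x \in X, y \in Y & z = x + y]) (z \in minkowski X Y).
Proof.
apply: (iffP idP) => [/imfset2P[x xX [y yY ->]]|[x [y [xX yY ->]]]].
  by exists x, y.
by apply/imfset2P; exists x => //; exists y.
Qed.

Lemma mem_minkowski X Y x y : x \in X -> y \in Y -> x + y \in minkowski X Y.
Proof. by move=> xX yY; apply/minkowskiP; exists x, y. Qed.

Lemma minkowskiC X Y : minkowski X Y = minkowski Y X.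
Proof.
by apply/fsetP => z; apply/minkowskiP/minkowskiP => -[x [y [xX yY ->]]];
  exists y, x; rewrite addrC.
Qed.

Lemma minkowski_neq0 X Y : X != fset0 -> Y != fset0 -> minkowski X Y != fset0.
Proof.
by move=> /fset0Pn[x xX] /fset0Pn[y yY]; apply/fset0Pn; exists (x + y); apply: mem_minkowski.
Qed.

Lemma minkowski1 x y : minkowski [fset x]%fset [fset y]%fset = [fset (x + y)%R]%fset.
Proof.
apply/fsetP => z; rewrite inE; apply/minkowskiP/eqP => [[x' [y' []]]|->].
  by rewrite !inE => /eqP-> /eqP-> ->.
by exists x, y; rewrite !inE.
Qed.

End Minkowski.

Lemma ler_sum_fsubset (K : choiceType) (R : numDomainType) (A B : {fset K})
    (F : K -> R) : (A `<=` B)%fset -> (forall x, x \in B -> 0 <= F x) ->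
  \sum_(x <- A) F x <= \sum_(x <- B) F x.
Proof.
move=> AB F0; rewrite [leRHS](big_fsetID _ (mem A)) /= -[leLHS]addr0.
apply: lerD; last by rewrite big_seq sumr_ge0 // => x; rewrite !inE => /andP[/F0].
rewrite le_eqVlt; apply/orP; left; apply/eqP; apply: eq_fbigl => x; rewrite !inE /=.
by apply/idP/andP => [xA|[]//]; rewrite (fsubsetP AB).
Qed.

Section WeightedSumset.
Variables (R : realFieldType) (h : R -> R).
Implicit Types (X Y : {fset R}) (w v : R -> R) (m : R).

Definition dominates w v := [/\ forall x, 0 <= w x, forall y, 0 <= v y &
  forall x y, Num.min (w x) (v y) <= h (x + y)].

Definition heavy X w m := exists2 x, x \in X & m <= w x.

Definition tmass X w m := \sum_(x <- X) Num.min (w x) m.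

(* For [w = v = h = 1] and [m = 1] this is [#|X + Y| >= #|X| + #|Y| - 1]. *)
Definition sumset_bound X Y w v m :=
  tmass X w m + tmass Y v m - m <= \sum_(z <- minkowski X Y) h z.

Lemma dominatesC w v : dominates w v -> dominates v w.
Proof. by case=> w0 v0 dom; split=> // x y; rewrite minC addrC. Qed.

Lemma sumset_boundC X Y w v m : sumset_bound Y X v w m -> sumset_bound X Y w v m.
Proof. by rewrite /sumset_bound minkowskiC [tmass X w m + _]addrC. Qed.

Lemma heavy_neq0 X w m : heavy X w m -> X != fset0.
Proof. by case=> x xX _; apply/fset0Pn; exists x. Qed.

Lemma dominates_ge0 X Y w v z : dominates w v -> z \in minkowski X Y -> 0 <= h z.
Proof.
by case=> w0 v0 dom /minkowskiP[x [y [_ _ ->]]]; apply: le_trans (dom x y); rewrite le_min w0 v0.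
Qed.

Lemma sumset_bound1 x y w v m : dominates w v -> m <= w x -> m <= v y ->
  sumset_bound [fset x]%fset [fset y]%fset w v m.
Proof.
case=> _ _ dom mx my; rewrite /sumset_bound /tmass minkowski1 !big_seq_fset1.
by rewrite !min_r // addrK; apply: le_trans (dom x y); rewrite le_min mx my.
Qed.

(* Removing [e] loses at most [min (w e) m] on the left, while the sum [e + f],
   which is not in [(X \ e) + Y], contributes [h (e + f) >= min (w e) (v f)]. *)
Lemma sumset_bound_remove X Y w v m e f : dominates w v -> e \in X -> f \in Y ->
    (forall x y, x \in (X `\ e)%fset -> y \in Y -> x + y != e + f) ->
    Num.min (w e) m <= v f ->
  sumset_bound (X `\ e)%fset Y w v m -> sumset_bound X Y w v m.
Proof.
move=> dom eX fY fresh hef; rewrite /sumset_bound /tmass (big_fsetD1 e eX) /=.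
have efS : e + f \in minkowski X Y by apply: mem_minkowski.
rewrite (big_fsetD1 _ efS) /=.
have gain : Num.min (w e) m <= h (e + f).
  by case: dom => _ _ /(_ e f); apply: le_trans; rewrite le_min ge_min lexx hef.
suff : \sum_(z <- minkowski (X `\ e)%fset Y) h z <=
       \sum_(z <- (minkowski X Y `\ (e + f)%R)%fset) h z by lra.
apply: ler_sum_fsubset => [|z]; last by rewrite in_fsetD1 => /andP[_ /(dominates_ge0 dom)].
apply/fsubsetP => _ /minkowskiP[x [y [xXe yY ->]]].
rewrite in_fsetD1 fresh //= mem_minkowski //.
by move: xXe; rewrite in_fsetD1 => /andP[].
Qed.

Lemma sumset_bound_remove_max X Y w v m a b : dominates w v -> a \in X -> b \in Y ->
    (forall x, x \in X -> x <= a) -> (forall y, y \in Y -> y <= b) ->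
    Num.min (w a) m <= v b ->
  sumset_bound (X `\ a)%fset Y w v m -> sumset_bound X Y w v m.
Proof.
move=> dom aX bY amax bmax; apply: sumset_bound_remove => // x y.
rewrite in_fsetD1 => /andP[xa /amax xa'] /bmax yb.
have : x < a by rewrite lt_neqAle xa xa'.
by move=> ? ; apply/eqP => ?; lra.
Qed.

Lemma sumset_bound_remove_min X Y w v m a b : dominates w v -> a \in X -> b \in Y ->
    (forall x, x \in X -> a <= x) -> (forall y, y \in Y -> b <= y) ->
    Num.min (w a) m <= v b ->
  sumset_bound (X `\ a)%fset Y w v m -> sumset_bound X Y w v m.
Proof.
move=> dom aX bY amin bmin; apply: sumset_bound_remove => // x y.
rewrite in_fsetD1 => /andP[xa /amin ax] /bmin b_le_y.
have : a < x by rewrite lt_neqAle eq_sym xa ax.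
by move=> ? ; apply/eqP => ?; lra.
Qed.

Lemma fset_card_le1 (K : choiceType) (X : {fset K}) a :
  a \in X -> (#|` X| <= 1)%N -> X = [fset a]%fset.
Proof.
move=> aX X1; have /cardfs1P[x eX] : #|` X| == 1%N.
  by rewrite eqn_leq X1 lt0n cardfs_eq0; apply/fset0Pn; exists a.
by move: aX; rewrite eX inE => /eqP->.
Qed.

Let bound_upto n := forall X Y w v m, (#|` X| + #|` Y| <= n)%N ->
  dominates w v -> heavy X w m -> heavy Y v m -> sumset_bound X Y w v m.

Lemma sumset_bound_step_light n X Y w v m a a1 b1 : bound_upto n ->
    (#|` X| + #|` Y| <= n.+1)%N -> dominates w v -> heavy Y v m ->
    a \in X -> m <= w a -> a1 \in (X `\ a)%fset -> w a1 < m ->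
    (forall x, x \in X -> a1 <= x) -> b1 \in Y -> (forall y, y \in Y -> b1 <= y) ->
  sumset_bound X Y w v m.
Proof.
rewrite /bound_upto => IH size dom hY aX ma a1Xa wa1 a1min b1Y b1min.
have [a1a a1X] : a1 != a /\ a1 \in X by apply/andP; rewrite -in_fsetD1.
have [wv|vw] := lerP (w a1) (v b1).
  apply: (sumset_bound_remove_min dom a1X b1Y a1min b1min); first by rewrite ge_min wv.
  apply: IH => //; first by move: size; rewrite (cardfsD1 a1 X) a1X.
  by exists a; rewrite // in_fsetD1 aX eq_sym a1a.
apply/sumset_boundC/(sumset_bound_remove_min (dominatesC dom) b1Y a1X b1min a1min).
  by rewrite ge_min (ltW vw).
have [y0 y0Y my0] := hY.
apply: IH; [|exact: dominatesC| |by exists a].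
  by move: size; rewrite (cardfsD1 b1 Y) b1Y addnS addnC.
exists y0 => //; rewrite in_fsetD1 y0Y andbT; apply/eqP => y0b1.
by move: my0; rewrite y0b1; lra.
Qed.

(* Drop the maximum of [X] together with that of [Y], unless it is the only
   heavy point of [X]; then drop the minimum of [X] or of [Y], whichever is lighter. *)
Lemma sumset_bound_step n X Y w v m a b : bound_upto n ->
    (#|` X| + #|` Y| <= n.+1)%N -> dominates w v -> heavy X w m -> heavy Y v m ->
    (1 < #|` X|)%N -> a \in X -> b \in Y ->
    (forall x, x \in X -> x <= a) -> (forall y, y \in Y -> y <= b) ->
    Num.min (w a) m <= v b ->
  sumset_bound X Y w v m.
Proof.
move=> IH size dom hX hY X2 aX bY amax bmax hab.
have [hXa|lightXa] := pselect (heavy (X `\ a)%fset w m).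
  apply: (sumset_bound_remove_max dom aX bY amax bmax hab).
  by apply: IH => //; move: size; rewrite (cardfsD1 a X) aX.
have light x : x \in (X `\ a)%fset -> w x < m.
  by move=> xXa; rewrite ltNge; apply/negP => mx; apply: lightXa; exists x.
have [a1 a1X a1min] := fset_argmin id (heavy_neq0 hX).
have [b1 b1Y b1min] := fset_argmin id (heavy_neq0 hY).
have a1Xa : a1 \in (X `\ a)%fset.
  have /fset0Pn[x xXa] : (X `\ a)%fset != fset0.
    by rewrite -cardfs_gt0; move: X2; rewrite (cardfsD1 a X) aX.
  move: (xXa); rewrite !in_fsetD1 a1X andbT => /andP[xa xX]; apply: contraNneq xa => a1a.
  by rewrite eq_le amax //= -a1a a1min.
have ma : m <= w a.
  case: hX => x0 x0X mx0; have [<-//|x0a] := eqVneq x0 a.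
  by have := light x0; rewrite in_fsetD1 x0a x0X => /(_ isT); lra.
exact: sumset_bound_step_light IH size dom hY aX ma a1Xa (light _ a1Xa) a1min b1Y b1min.
Qed.

Lemma sumset_bound_upto n : bound_upto n.
Proof.
elim: n => [|n IH] X Y w v m size dom hX hY.
  by move: size; rewrite leqn0 addn_eq0 cardfs_eq0 (negbTE (heavy_neq0 hX)).
have [a aX amax] := fset_argmax id (heavy_neq0 hX).
have [b bY bmax] := fset_argmax id (heavy_neq0 hY).
wlog hab : X Y w v a b aX bY amax bmax size dom hX hY / Num.min (w a) m <= v b.
  move=> wlog_hab; have [|ba] := leP (Num.min (w a) m) (v b); first exact: wlog_hab.
  apply/sumset_boundC/(wlog_hab Y X v w b a bY aX bmax amax _ (dominatesC dom) hY hX).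
    by rewrite addnC.
  by move: ba; rewrite lt_min => /andP[bwa _]; rewrite ge_min (ltW bwa).
have [X1|X2] := leqP #|` X| 1; last first.
  exact: sumset_bound_step IH size dom hX hY X2 aX bY amax bmax hab.
have eX := fset_card_le1 aX X1.
have ma : m <= w a by case: hX => x; rewrite eX inE => /eqP->.
have mb : m <= v b by move: hab; rewrite ge_min => /orP[/(le_trans ma)|].
have [Y1|Y2] := leqP #|` Y| 1; first by rewrite eX (fset_card_le1 bY Y1); apply: sumset_bound1.
apply/sumset_boundC/(sumset_bound_step IH _ (dominatesC dom) hY hX Y2 bY aX bmax amax).
  by rewrite addnC.
by rewrite ge_min ma orbT.
Qed.

Theorem weighted_sumset_bound X Y w v m :
  dominates w v -> heavy X w m -> heavy Y v m -> sumset_bound X Y w v m.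
Proof. exact: sumset_bound_upto. Qed.

End WeightedSumset.

Lemma imfset_neq0 (K V : choiceType) (f : K -> V) (X : {fset K}) :
  X != fset0 -> (f @` X)%fset != fset0.
Proof. by case/fset0Pn => x xX; apply/fset0Pn; exists (f x); apply: in_imfset. Qed.

Section CoordinateProjection.
Variables (R : zmodType) (d : nat).
Implicit Types (I J D : {set 'I_d}) (x : 'rV[R]_d) (X Y S : {fset 'rV[R]_d}).

Definition cproj I x : 'rV[R]_d := \row_i (if i \in I then x 0 i else 0).

Definition proj_sum D S : nat :=
  \sum_(I : {set 'I_d} | I \subset D) #|` (cproj I @` S)%fset|.

Definition coordset S k : {fset R} := [fset (x : 'rV[R]_d) 0 k | x in S]%fset.

Definition slice S k z : {fset 'rV[R]_d} := [fset x in S | x 0 k == z]%fset.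

Lemma cproj_setT x : cproj [set: 'I_d]%SET x = x.
Proof. by apply/rowP => i; rewrite mxE inE. Qed.

Lemma imfset_cproj_setT S : (cproj [set: 'I_d]%SET @` S)%fset = S.
Proof. by rewrite (eq_imfset _ cproj_setT (fun=> erefl)) imfset_id. Qed.

Lemma cproj_coord I k x : k \in I -> cproj I x 0 k = x 0 k.
Proof. by move=> kI; rewrite mxE kI. Qed.

Lemma cprojU1 k J x : k \notin J -> cproj (k |: J) x = cproj J x + cproj [set k]%SET x.
Proof.
move=> kJ; apply/rowP => i; rewrite !mxE !inE.
by case: eqP => [->|_] /=; rewrite ?(negbTE kJ) ?add0r ?addr0.
Qed.

Lemma card_cproj_set0 S : S != fset0 -> #|` (cproj finset.set0 @` S)%fset| = 1%N.
Proof.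
move=> S0; apply/eqP/cardfs1P; exists 0; apply/fsetP => y; rewrite inE.
apply/imfsetP/eqP => [[x _ ->]|->]; first by apply/rowP => i; rewrite !mxE inE.
by case/fset0Pn: S0 => x xS; exists x => //; apply/rowP => i; rewrite !mxE inE.
Qed.

Lemma card_cproj_gt0 I S : S != fset0 -> (0 < #|` (cproj I @` S)%fset|)%N.
Proof. by move=> S0; rewrite cardfs_gt0 imfset_neq0. Qed.

Lemma card_cproj_sub I X Y : (X `<=` Y)%fset ->
  (#|` (cproj I @` X)%fset| <= #|` (cproj I @` Y)%fset|)%N.
Proof.
move=> XY; apply/fsubset_leq_card/fsubsetP => _ /imfsetP[x xX ->].
by rewrite in_imfset // (fsubsetP XY).
Qed.

Lemma in_slice S k z x : (x \in slice S k z) = (x \in S) && (x 0 k == z).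
Proof. by rewrite !inE. Qed.

Lemma slice_sub S k z : (slice S k z `<=` S)%fset.
Proof. by apply/fsubsetP => x; rewrite in_slice => /andP[]. Qed.

Lemma slice_neq0 S k z : z \in coordset S k -> slice S k z != fset0.
Proof. by case/imfsetP => x xS ->; apply/fset0Pn; exists x; rewrite in_slice xS eqxx. Qed.

Lemma card_cproj_slices I k S : k \in I ->
  #|` (cproj I @` S)%fset| =
    (\sum_(z <- coordset S k) #|` (cproj I @` slice S k z)%fset|)%N.
Proof.
move=> kI; rewrite (card_fset_fibers (fun y : 'rV[R]_d => y 0 k)).
have -> : [fset (y : 'rV[R]_d) 0 k | y in (cproj I @` S)%fset]%fset = coordset S k.
  apply/fsetP => z; apply/imfsetP/imfsetP => [[_ /imfsetP[x xS ->] ->]|[x xS ->]].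
    by exists x; rewrite ?cproj_coord.
  by exists (cproj I x); rewrite ?cproj_coord ?in_imfset.
apply: eq_bigr => z _; congr #|` _|; apply/fsetP => y; rewrite !inE /=.
apply/andP/imfsetP => [[/imfsetP[x xS ->] /eqP xz]|[x]].
  by exists x; rewrite // in_slice xS -xz cproj_coord ?eqxx.
by rewrite in_slice => /andP[xS /eqP xz] ->; rewrite in_imfset ?cproj_coord ?xz.
Qed.

(* On a slice, adding the coordinate [k] to the projection is a translation. *)
Lemma card_cproj_setU1 k J S : k \notin J ->
  #|` (cproj (k |: J) @` S)%fset| =
    (\sum_(z <- coordset S k) #|` (cproj J @` slice S k z)%fset|)%N.
Proof.
move=> kJ; rewrite (@card_cproj_slices _ k) ?setU11 //; apply: eq_bigr => z _.
pose c := cproj [set k]%SET (const_mx z).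
have cE x : x \in slice S k z -> cproj [set k]%SET x = c.
  rewrite in_slice => /andP[_ /eqP xz]; apply/rowP => i; rewrite !mxE inE.
  by case: eqP => // ->.
have -> : (cproj (k |: J) @` slice S k z)%fset = ((+%R^~ c) @` (cproj J @` slice S k z))%fset.
  apply/fsetP => y; apply/imfsetP/imfsetP => [[x xS ->]|[_ /imfsetP[x xS ->] ->]].
    by exists (cproj J x); [apply: in_imfset | rewrite /= cprojU1 ?cE].
  by exists x; rewrite //= cprojU1 ?cE.
by rewrite card_imfset //; apply: addIr.
Qed.

Lemma card_cproj_slicesD1 k D S : k \in D ->
  #|` (cproj D @` S)%fset| =
    (\sum_(z <- coordset S k) #|` (cproj (D :\ k) @` slice S k z)%fset|)%N.
Proof. by move=> kD; rewrite -[in LHS](finset.setD1K kD) card_cproj_setU1 ?finset.setD11. Qed.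

Lemma proj_sum_slices k D S : k \in D ->
  proj_sum D S = (proj_sum (D :\ k) S +
    \sum_(z <- coordset S k) proj_sum (D :\ k) (slice S k z))%N.
Proof.
move=> kD; rewrite /proj_sum (bigID (fun I => k \in I)) /= addnC; congr (_ + _)%N.
  by apply: eq_bigl => I; rewrite finset.subsetD1 andbC.
rewrite (reindex_onto (fun J => k |: J) (fun I => I :\ k)) /=; last first.
  by move=> I /andP[_ kI]; rewrite finset.setD1K.
rewrite exchange_big /=; rewrite (eq_bigl (fun J => J \subset D :\ k)) => [|J].
  apply: eq_bigr => J JD; apply: card_cproj_setU1; apply: contraL JD => kJ.
  by apply/negP => /fintype.subsetP/(_ k kJ); rewrite !inE eqxx.
rewrite finset.setU11 andbT finset.subsetD1 finset.subUset finset.sub1set kD /=.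
congr (_ && _); have [kJ|kJ] /= := boolP (k \in J); last by rewrite finset.setU1K ?eqxx.
by apply/negbTE/eqP => JE; move: kJ; rewrite -JE finset.setD11.
Qed.

Lemma proj_sumT S : proj_sum [set: 'I_d]%SET S =
  (#|` S| + \sum_(I : {set 'I_d} | I != [set: 'I_d]%SET) #|` (cproj I @` S)%fset|)%N.
Proof.
rewrite /proj_sum (bigD1 [set: 'I_d]%SET) ?finset.subsetT //=; congr (_ + _)%N.
  by rewrite imfset_cproj_setT.
by apply: eq_bigl => I; rewrite finset.subsetT.
Qed.

Lemma proj_sum_mono D X Y : (X `<=` Y)%fset -> (proj_sum D X <= proj_sum D Y)%N.
Proof. by move=> XY; apply: leq_sum => I _; apply: card_cproj_sub. Qed.

Lemma proj_sum_gt0 D S : S != fset0 -> (0 < proj_sum D S)%N.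
Proof.
by move=> S0; rewrite /proj_sum (bigD1 finset.set0) ?finset.sub0set //= card_cproj_set0.
Qed.

Lemma coordset_minkowski A B k :
  coordset (minkowski A B) k = minkowski (coordset A k) (coordset B k).
Proof.
apply/fsetP => z; apply/imfsetP/minkowskiP => [[_ /minkowskiP[a [b [aA bB ->]]] ->]|].
  by exists (a 0 k), (b 0 k); split; rewrite ?mxE //; apply: in_imfset.
case=> _ [_ [/imfsetP[a aA ->] /imfsetP[b bB ->] ->]].
by exists (a + b); rewrite ?mem_minkowski ?mxE.
Qed.

Lemma minkowski_slice A B k a b :
  (minkowski (slice A k a) (slice B k b) `<=` slice (minkowski A B) k (a + b)%R)%fset.
Proof.
apply/fsubsetP => _ /minkowskiP[x [y [+ + ->]]].
rewrite !in_slice => /andP[xA /eqP xa] /andP[yB /eqP yb].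
by rewrite mxE xa yb eqxx mem_minkowski.
Qed.

End CoordinateProjection.

Lemma exprn_powR_inv (R : realType) (t : R) n : 0 <= t -> (0 < n)%N ->
  (t `^ n%:R^-1) ^+ n = t.
Proof.
move=> t0 n0; rewrite -powR_mulrn ?powR_ge0 // -powRrM mulVf ?powRr1 //.
by rewrite pnatr_eq0 -lt0n.
Qed.

Section ProjectionBrunnMinkowski.
Variables (R : realType) (d : nat).
Implicit Types (D : {set 'I_d}) (A B : {fset 'rV[R]_d}).

(* The theorem for the coordinates in [D], with [|D| = n], in the form proved by
   induction: [s] and [t] stand for [|p_D A|^(1/n)] and [|p_D B|^(1/n)], and the
   right-hand side also counts the projections of [A + B] onto proper subsets of [D]. *)
Definition proj_brunn_minkowski n D := forall A B, A != fset0 -> B != fset0 ->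
  forall s t : R, 0 <= s -> 0 <= t ->
  s ^+ n <= #|` (cproj D @` A)%fset|%:R -> t ^+ n <= #|` (cproj D @` B)%fset|%:R ->
  (s + t) ^+ n <= (proj_sum D (minkowski A B))%:R.

Lemma proj_brunn_minkowski_scale n D : proj_brunn_minkowski n D ->
  forall A B, A != fset0 -> B != fset0 -> forall th p q : R,
  0 < th -> th <= 1 -> 0 <= p -> 0 <= q ->
  th * p ^+ n <= #|` (cproj D @` A)%fset|%:R -> th * q ^+ n <= #|` (cproj D @` B)%fset|%:R ->
  th * (p + q) ^+ n <= (proj_sum D (minkowski A B))%:R.
Proof.
move=> hBM A B A0 B0 th p q th0 th1 p0 q0 hp hq.
case: n hBM hp hq => [|n] hBM hp hq.
  rewrite expr0 mulr1; apply: le_trans th1 _.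
  have := hBM A B A0 B0 0 0 (lexx _) (lexx _).
  by rewrite !expr0 !ler1n !card_cproj_gt0 //; apply.
pose r := th `^ n.+1%:R^-1.
have r0 : 0 <= r by apply: powR_ge0.
have rE : r ^+ n.+1 = th by rewrite exprn_powR_inv // ltW.
have := hBM A B A0 B0 (r * p) (r * q) (mulr_ge0 r0 p0) (mulr_ge0 r0 q0).
by rewrite -mulrDr !exprMn rE; apply.
Qed.

Section Step.
Variables (n : nat) (D : {set 'I_d}) (k : 'I_d).
Hypotheses (kD : k \in D) (cardD : #|D :\ k| = n).
Hypothesis IH : proj_brunn_minkowski n (D :\ k).
Variables (A B : {fset 'rV[R]_d}) (am bm : R).
Hypotheses (A0 : A != fset0) (B0 : B != fset0).

Let slice_card (S : {fset 'rV[R]_d}) (z : R) : R :=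
  #|` (cproj (D :\ k) @` slice S k z)%fset|%:R.

Hypotheses (amA : am \in coordset A k) (bmB : bm \in coordset B k).
Hypothesis amax : forall a, a \in coordset A k -> slice_card A a <= slice_card A am.
Hypothesis bmax : forall b, b \in coordset B k -> slice_card B b <= slice_card B bm.

Let P := slice_card A am `^ n%:R^-1.
Let Q := slice_card B bm `^ n%:R^-1.
Let K := (P + Q) ^+ n.
Let slice_mass z : R := (proj_sum (D :\ k) (slice (minkowski A B) k z))%:R.

(* Slices are weighted relative to the largest one, so that the largest slices
   get weight K, the bound the induction hypothesis gives for A + B itself. *)
Let weight S z0 z := if z \in coordset S k then slice_card S z / slice_card S z0 * K else 0.

Lemma slice_card_gt0 S z : z \in coordset S k -> 0 < slice_card S z.
Proof. by move=> zS; rewrite ltr0n card_cproj_gt0 // slice_neq0. Qed.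

Lemma exprn_slice_card_root S z : z \in coordset S k ->
  (slice_card S z `^ n%:R^-1) ^+ n = slice_card S z.
Proof.
move=> zS; have [n0|n0] := posnP n; last by rewrite exprn_powR_inv ?ler0n.
have D0 : D :\ k = finset.set0 by apply: finset.cards0_eq; rewrite cardD n0.
by rewrite n0 expr0 /slice_card D0 card_cproj_set0 // slice_neq0.
Qed.

Lemma slice_card_ratio_le1 S z0 z :
    (forall y, y \in coordset S k -> slice_card S y <= slice_card S z0) ->
  z \in coordset S k -> slice_card S z / slice_card S z0 <= 1.
Proof.
move=> z0max zS; rewrite ler_pdivrMr ?mul1r ?z0max //.
exact: lt_le_trans (slice_card_gt0 zS) (z0max _ zS).
Qed.

Lemma K_ge0 : 0 <= K.
Proof. by rewrite exprn_ge0 // addr_ge0 ?powR_ge0. Qed.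

Lemma weight_ge0 S z0 z : 0 <= weight S z0 z.
Proof. by rewrite /weight; case: ifP => // _; rewrite mulr_ge0 ?K_ge0 ?divr_ge0 ?ler0n. Qed.

Lemma slice_bound a b th : a \in coordset A k -> b \in coordset B k -> 0 < th ->
    th <= slice_card A a / slice_card A am -> th <= slice_card B b / slice_card B bm ->
  th * K <= slice_mass (a + b).
Proof.
move=> aA bB th0 tha thb.
pose AB := minkowski (slice A k a) (slice B k b).
apply: (@le_trans _ _ (proj_sum (D :\ k) AB)%:R); last first.
  by rewrite ler_nat proj_sum_mono // minkowski_slice.
apply: proj_brunn_minkowski_scale IH _ _ (slice_neq0 aA) (slice_neq0 bB) _ _ _ th0 _
  (powR_ge0 _ _) (powR_ge0 _ _) _ _.
- exact: le_trans tha (slice_card_ratio_le1 amax aA).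
- by rewrite exprn_slice_card_root // -ler_pdivlMr ?slice_card_gt0.
- by rewrite exprn_slice_card_root // -ler_pdivlMr ?slice_card_gt0.
Qed.

Lemma dominates_slices : dominates slice_mass (weight A am) (weight B bm).
Proof.
split=> [a|b|a b]; rewrite ?weight_ge0 // /weight.
have [aA|aA] := boolP (a \in coordset A k); last by rewrite ge_min ler0n.
have [bB|bB] := boolP (b \in coordset B k); last by rewrite ge_min ler0n orbT.
rewrite ge_min; have [ab|ba] := leP (slice_card A a / slice_card A am)
  (slice_card B b / slice_card B bm).
  by rewrite slice_bound // divr_gt0 ?slice_card_gt0.
by apply/orP; right; apply: slice_bound; rewrite ?divr_gt0 ?slice_card_gt0 // ltW.
Qed.

Lemma tmass_weight S z0 :
    (forall z, z \in coordset S k -> slice_card S z <= slice_card S z0) ->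
  tmass (coordset S k) (weight S z0) K = #|` (cproj D @` S)%fset|%:R / slice_card S z0 * K.
Proof.
move=> z0max; rewrite /tmass (card_cproj_slicesD1 _ kD) natr_sum !mulr_suml.
rewrite big_seq [RHS]big_seq; apply: eq_bigr => z zS; rewrite /weight zS min_l //.
by rewrite ler_piMl ?K_ge0 // slice_card_ratio_le1.
Qed.

Lemma heavy_weight S z0 : z0 \in coordset S k -> heavy (coordset S k) (weight S z0) K.
Proof. by move=> z0S; exists z0; rewrite // /weight z0S divff ?mul1r // gt_eqF ?slice_card_gt0. Qed.

Lemma K_le_proj_sum : K <= (proj_sum (D :\ k) (minkowski A B))%:R.
Proof.
apply: IH; rewrite ?powR_ge0 ?exprn_slice_card_root //.
  by rewrite ler_nat card_cproj_sub ?slice_sub.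
by rewrite ler_nat card_cproj_sub ?slice_sub.
Qed.

Lemma proj_sum_slices_ge :
  (#|` (cproj D @` A)%fset|%:R / slice_card A am +
   #|` (cproj D @` B)%fset|%:R / slice_card B bm) * K <= (proj_sum D (minkowski A B))%:R.
Proof.
have := weighted_sumset_bound dominates_slices (heavy_weight amA) (heavy_weight bmB).
rewrite /sumset_bound (tmass_weight amax) (tmass_weight bmax) -coordset_minkowski.
rewrite (proj_sum_slices _ kD) natrD natr_sum mulrDl /slice_mass.
by have := K_le_proj_sum; lra.
Qed.

End Step.

Lemma proj_brunn_minkowski_succ n D k : k \in D -> #|D :\ k| = n ->
  proj_brunn_minkowski n (D :\ k) -> proj_brunn_minkowski n.+1 D.
Proof.
move=> kD cardD IH A B A0 B0 s t s0 t0 hs ht.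
pose slice_card (S : {fset 'rV[R]_d}) (z : R) : R := #|` (cproj (D :\ k) @` slice S k z)%fset|%:R.
have [am amA amax] := fset_argmax (slice_card A) (imfset_neq0 (fun x : 'rV_d => x 0 k) A0).
have [bm bmB bmax] := fset_argmax (slice_card B) (imfset_neq0 (fun x : 'rV_d => x 0 k) B0).
apply: le_trans (proj_sum_slices_ge kD cardD IH A0 B0 amA bmB amax bmax).
apply: holder_exprSn; rewrite ?powR_gt0 ?slice_card_gt0 //.
  by rewrite exprn_slice_card_root ?divfK ?gt_eqF ?slice_card_gt0.
by rewrite exprn_slice_card_root ?divfK ?gt_eqF ?slice_card_gt0.
Qed.

Lemma proj_brunn_minkowski_card n D : #|D| = n -> proj_brunn_minkowski n D.
Proof.
elim: n D => [|n IHn] D cardD.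
  move=> A B A0 B0 s t _ _ _ _.
  by rewrite expr0 ler1n proj_sum_gt0 // minkowski_neq0.
have /finset.set0Pn[k kD] : D != finset.set0 by rewrite -finset.card_gt0 cardD.
have cardDk : #|D :\ k| = n by move: cardD; rewrite (finset.cardsD1 k) kD add1n => -[].
exact: proj_brunn_minkowski_succ kD cardDk (IHn _ cardDk).
Qed.

End ProjectionBrunnMinkowski.

Lemma exprn_powR_inv_le (R : realType) (t : R) n : 1 <= t -> (t `^ n%:R^-1) ^+ n <= t.
Proof. by case: n => [|n] t1; rewrite ?expr0 ?exprn_powR_inv //; lra. Qed.

Section Coordinates.
Variables (R : realType) (d : nat) (b : 'M[R]_d).
Hypothesis hb : b \in unitmx.
Implicit Types (A B S : {fset 'rV[R]_d}).

Lemma coords_inj : injective (coords b).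
Proof. by move=> x y /(congr1 (mulmx^~ b)); rewrite /coords !mulmxKV. Qed.

Lemma card_coords S : #|` (coords b @` S)%fset| = #|` S|.
Proof. exact/card_imfset/coords_inj. Qed.

Lemma coords_minkowski A B :
  (coords b @` minkowski A B)%fset = minkowski (coords b @` A)%fset (coords b @` B)%fset.
Proof.
apply/fsetP => z; apply/imfsetP/minkowskiP => [[_ /minkowskiP[x [y [xA yB ->]]] ->]|].
  by exists (coords b x), (coords b y); split; rewrite ?in_imfset // /coords mulmxDl.
case=> _ [_ [/imfsetP[x xA ->] /imfsetP[y yB ->] ->]].
by exists (x + y); rewrite ?mem_minkowski // /coords mulmxDl.
Qed.

Lemma card_projI I S : #|` (projI b I @` S)%fset| = #|` (cproj I @` (coords b @` S))%fset|.
Proof.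
have mulb_inj : injective (mulmx^~ b : 'rV[R]_d -> 'rV[R]_d).
  by move=> x y /(congr1 (mulmx^~ (invmx b))); rewrite !mulmxK.
have -> : (projI b I @` S)%fset = (mulmx^~ b @` (cproj I @` (coords b @` S)))%fset.
  by rewrite -!imfset_comp.
exact: card_imfset.
Qed.

End Coordinates.

Theorem lemma2p1 (R : realType) (d : nat) (b : 'M[R]_d)
  (hb : b \in unitmx) (A B : {fset 'rV[R]_d})
  (hA : A != fset0) (hB : B != fset0) :
  (#|` sumset A B|%:R : R) >=
    ((#|` A|%:R) `^ (d%:R^-1) + (#|` B|%:R) `^ (d%:R^-1)) ^+ d
    - \sum_(I : {set 'I_d} | I != [set: 'I_d]%SET) (#|` (projI b I @` sumset A B)%fset|%:R).
Proof.
have cardT : #|[set: 'I_d]%SET| = d by rewrite cardsT card_ord.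
have rootS (S : {fset 'rV[R]_d}) : S != fset0 -> (#|` S|%:R `^ d%:R^-1) ^+ d <= #|` S|%:R :> R.
  by move=> S0; rewrite exprn_powR_inv_le // ler1n cardfs_gt0.
have := proj_brunn_minkowski_card cardT (imfset_neq0 (coords b) hA) (imfset_neq0 (coords b) hB)
  (powR_ge0 #|` A|%:R d%:R^-1) (powR_ge0 #|` B|%:R d%:R^-1).
rewrite !imfset_cproj_setT !(card_coords hb).
move=> /(_ (rootS _ hA) (rootS _ hB)).
rewrite -coords_minkowski proj_sumT (card_coords hb) natrD natr_sum => bound.
under [X in _ - X]eq_bigr do rewrite (card_projI hb).
by rewrite lerBlDr; exact: bound.
Qed.
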